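(* For any acyclic hypergraph $\mathcal{H}$, $\kappa(\mathcal{H})=\rho^*(\mathcal{H})$.
   Context: A hypergraph $\mathcal{H}=(V,E)$ (with $V=\bigcup_{e\in E}e$) is acyclic ($\alpha$-acyclic) if it admits a join tree: a tree whose nodes are the edges of $E$ such that for every vertex $v$, the nodes containing $v$ form a connected subtree. For $S\subseteq V$, $\mathcal{H}[S]$ is the hypergraph with vertex set $S$ and edge set $\{S\cap e : e\in E,\ S\cap e\neq\emptyset\}$. $\mathsf{red}(\mathcal{H})$ is obtained by removing every edge $e$ for which there is another edge $e'\neq e$ with $e\subseteq e'$. $\tau^*$ is the value of a maximum fractional edge packing (equivalently, minimum fractional vertex cover) and $\rho^*$ the value of a minimum fractional edge cover. $\kappa(\mathcal{H})=\max_{S\subseteq V}\tau^*(\mathsf{red}(\mathcal{H}[S]))$. *)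

From HB Require Import structures.
From mathcomp Require Import all_boot all_order all_algebra.
From mathcomp Require Import boolp classical_sets reals.
Set Implicit Arguments. Unset Strict Implicit. Unset Printing Implicit Defensive.
Import Order.TTheory GRing.Theory Num.Theory.
Local Open Scope ring_scope.

Section Hyper.
Variable T : finType.
Implicit Types (E : {set {set T}}) (S : {set T}).

Definition hvertices E : {set T} := \bigcup_(e in E) e.

Definition hinduced E S : {set {set T}} :=
  [set S :&: e | e in [set e in E | S :&: e != finset.set0]].

Definition hred E : {set {set T}} :=
  [set e in E | ~~ [exists e' in E, (e' != e) && (e \subset e')]].

(* join tree: t is a tree (symmetric irreflexive adjacency relation on the
   nodes E, connected, with #|E|-1 undirected edges) such that for every
   vertex v the nodes containing v induce a connected subtree *)
Definition is_join_tree E (t : rel {set T}) : Prop :=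
  [/\ (forall x y, t x y -> (x \in E) && (y \in E)),
      (forall x y, t x y = t y x) /\ (forall x, ~~ t x x),
      (forall x y, x \in E -> y \in E -> connect t x y),
      #|[set p : {set T} * {set T} | t p.1 p.2]| = 2 * (#|E|).-1
    & (forall v x y, x \in E -> y \in E -> v \in x -> v \in y ->
        connect (fun a b => [&& t a b, v \in a & v \in b]) x y)].

Definition acyclic E : Prop := exists t, is_join_tree E t.

Variable R : realType.

Definition is_frac_packing E (w : {set T} -> R) : Prop :=
  (forall e, e \in E -> 0 <= w e) /\
  (forall v, v \in hvertices E -> \sum_(e in E | v \in e) w e <= 1).

Definition is_frac_cover E (w : {set T} -> R) : Prop :=
  (forall e, e \in E -> 0 <= w e) /\
  (forall v, v \in hvertices E -> 1 <= \sum_(e in E | v \in e) w e).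

Definition tau_star E : R :=
  sup (classical_sets.image [set w | is_frac_packing E w]%classic
         (fun w => \sum_(e in E) w e)).

Definition rho_star E : R :=
  inf (classical_sets.image [set w | is_frac_cover E w]%classic
         (fun w => \sum_(e in E) w e)).

Definition kappa E : R :=
  \big[Num.max/0]_(S : {set T} | S \subset hvertices E)
     tau_star (hred (hinduced E S)).
End Hyper.

(* Pruning a join tree leaf by leaf and numbering the edges in that order
   gives an injective rank with the running intersection property: each edge
   meets all higher edges inside a single higher edge.  Write top x for the
   highest edge through x.  If y and z share an edge and top y is not above
   top z, then z lies in top y; so vertices picked greedily by the rank of
   their tops share no edge.  For the whole vertex set this yields a strongly
   independent I whose tops cover it, whence
   rho* <= |I| <= tau*(red(H[I])) <= kappa.  For any S it yields a strongly
   independent I in S and a set X in S with |X| <= |I| meeting the top of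
   every vertex of S; as each edge of red(H[S]) is the trace on S of such a
   top, tau*(red(H[S])) <= |X| <= |I| <= rho*. *)

From mathcomp Require Import all_boot all_order all_algebra.
From mathcomp Require Import boolp classical_sets reals.
From mathcomp Require Import fintype finset zify.
Set Implicit Arguments. Unset Strict Implicit. Unset Printing Implicit Defensive.
Import Order.TTheory GRing.Theory Num.Theory.

Definition running_intersection (T : finType) (E : {set {set T}})
    (rk : {set T} -> nat) :=
  forall e f, e \in E -> f \in E -> rk e < rk f ->
  exists2 p, p \in E & rk e < rk p /\ {in E, forall g, rk e < rk g -> e :&: g \subset p}.

Definition strongly_independent (T : finType) (E : {set {set T}}) (I : {set T}) :=
  forall e, e \in E -> #|I :&: e| <= 1.

Lemma mem_hvertices (T : finType) (E : {set {set T}}) e x :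
  e \in E -> x \in e -> x \in hvertices E.
Proof. by move=> eE xe; apply/bigcupP; exists e. Qed.

Lemma strongly_independentU1 (T : finType) (E : {set {set T}}) I y :
    strongly_independent E I -> (forall e, e \in E -> y \in e -> I :&: e = set0) ->
  strongly_independent E (y |: I).
Proof.
move=> indI sepI e eE; rewrite setIUl.
have [ye|ye] := boolP (y \in e).
  by rewrite sepI // setU0 (setIidPl _) ?cards1 ?sub1set.
rewrite (_ : [set y] :&: e = set0) ?set0U ?indI //.
by apply/disjoint_setI0; rewrite disjoints1.
Qed.

Section RankedHypergraph.
Variables (T : finType) (E : {set {set T}}) (rk : {set T} -> nat).
Hypotheses (rk_inj : {in E &, injective rk}) (rk_rip : running_intersection E rk).
Implicit Types (S X I A e f g : {set T}).

Definition top x : {set T} :=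
  odflt set0 [pick e in E | (x \in e) && [forall f in E, (x \in f) ==> (rk f <= rk e)]].

Lemma topP x : x \in hvertices E ->
  [/\ top x \in E, x \in top x & forall f, f \in E -> x \in f -> rk f <= rk (top x)].
Proof.
move=> /bigcupP[e0 e0E xe0]; rewrite /top; case: pickP => [e /and3P[eE xe] /=|].
  by move=> /forall_inP maxe; split=> // f fE xf; apply: (implyP (maxe f fE)).
pose P := [pred e | (e \in E) && (x \in e)].
have Pe0 : P e0 by rewrite inE e0E xe0.
have [e /andP[eE xe] maxe] := arg_maxnP rk Pe0.
move=> /(_ e) /=; rewrite eE xe /=; case/negP; apply/forall_inP => f fE.
by apply/implyP => xf; apply: maxe; rewrite inE fE.
Qed.

Lemma rk_lt_top x f : f \in E -> x \in f -> f != top x -> rk f < rk (top x).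
Proof.
move=> fE xf ftop; have [topE _ maxtop] := topP (mem_hvertices fE xf).
by rewrite ltn_neqAle maxtop // andbT; apply: contra ftop => /eqP/rk_inj ->.
Qed.

Lemma higher_edge_subset e A : e \in E -> A \subset e -> A != set0 ->
    {in A, forall z, top z != e} ->
  exists2 p, p \in E & rk e < rk p /\ A \subset p.
Proof.
move=> eE Ae /set0Pn[z0 z0A] notop.
have [top0E _ _] := topP (mem_hvertices eE (subsetP Ae z0 z0A)).
have := rk_rip eE top0E (rk_lt_top eE (subsetP Ae z0 z0A) _).
case=> [|p pE [ltep subp]]; first by rewrite eq_sym notop.
exists p => //; split=> //; apply/subsetP => z zA.
have ze := subsetP Ae z zA.
have [topzE ztop _] := topP (mem_hvertices eE ze).
apply: (subsetP (subp _ topzE _)); first by apply: rk_lt_top; rewrite // eq_sym notop.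
by rewrite inE ze.
Qed.

Lemma mem_top e y z : e \in E -> y \in e -> z \in e ->
  rk (top y) <= rk (top z) -> z \in top y.
Proof.
move=> eE ye ze le_yz; pose P := [pred f | [&& f \in E, y \in f & z \in f]].
have Pe : P e by rewrite inE eE ye ze.
have [f /and3P[fE yf zf] maxf] := arg_maxnP rk Pe.
have [fy|fy] := eqVneq f (top y); first by rewrite -fy.
have [fz|fz] := eqVneq f (top z).
  by move: le_yz; rewrite -fz leqNgt rk_lt_top.
have [p pE [ltfp]] : exists2 p, p \in E & rk f < rk p /\ [set y; z] \subset p.
  apply: higher_edge_subset => //; first by rewrite subUset !sub1set yf zf.
    by apply/set0Pn; exists y; rewrite set21.
  by move=> x /set2P[]->; rewrite eq_sym.
rewrite subUset !sub1set => /andP[yp zp].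
by have := maxf p; rewrite inE pE yp zp => /(_ isT) /=; rewrite leqNgt ltfp.
Qed.

Lemma greedy_cover S : S \subset hvertices E ->
  exists2 I : {set T},
    I \subset S /\ strongly_independent E I & S \subset cover (top @: I).
Proof.
have [n] := ubnP #|S|; elim: n S => // n IH S /ltnSE cardS SV.
have [->|[y0 y0S]] := set_0Vmem S.
  by exists set0; rewrite ?sub0set //; split=> // e _; rewrite set0I cards0.
have [y yS ymin] := arg_minnP (P := [in S]) (fun z => rk (top z)) y0S.
have [topyE yty _] := topP (subsetP SV y yS).
pose S' := [set z in S | z \notin top y].
have S'S : S' \subset S by apply/subsetP => z; rewrite inE => /andP[].
have /IH[|I [IS' indI] S'I] : #|S'| < n.
- apply: leq_trans cardS; apply/proper_card/properP; split=> //.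
  by exists y; rewrite // inE yty andbF.
- exact: subset_trans SV.
exists (y |: I).
  split; first by rewrite subUset sub1set yS (subset_trans IS').
  apply: strongly_independentU1 => // e eE ye; apply/setP => z; rewrite !inE.
  apply/negbTE/andP => -[/(subsetP IS')]; rewrite inE => /andP[zS zy] ze.
  by rewrite (mem_top eE ye ze (ymin z zS)) in zy.
apply/subsetP => z zS; apply/bigcupP; have [zy|zy] := boolP (z \in top y).
  by exists (top y) => //; apply/imset_f/setU11.
have /(subsetP S'I)/bigcupP[_ /imsetP[w wI ->] zw] : z \in S' by rewrite inE zS.
by exists (top w) => //; apply/imset_f/setU1r.
Qed.

Lemma greedy_transversal S : S \subset hvertices E ->
  exists X I : {set T}, [/\ X \subset S, I \subset S, strongly_independent E I,
    {in S, forall z, exists2 x, x \in X & x \in top z} & #|X| <= #|I|].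
Proof.
have [n] := ubnP #|S|; elim: n S => // n IH S /ltnSE cardS SV.
have [->|[v0 v0S]] := set_0Vmem S.
  exists set0, set0; split; rewrite ?sub0set ?cards0 //.
    by move=> e _; rewrite set0I cards0.
  by move=> z; rewrite inE.
have [v vS vmin] := arg_minnP (P := [in S]) (fun z => rk (top z)) v0S.
have [topvE vtv _] := topP (subsetP SV v vS).
have vSv : v \in S :&: top v by rewrite inE vS vtv.
have [x /setIP[xS xtv] xmax] :=
  arg_maxnP (P := [in S :&: top v]) (fun z => rk (top z)) vSv.
pose S' := [set z in S | x \notin top z].
have S'S : S' \subset S by apply/subsetP => z; rewrite inE => /andP[].
have vS' : v \notin S' by rewrite inE xtv andbF.
have /IH[|X [I [XS' IS' indI hitS' cardXI]]] : #|S'| < n.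
- apply: leq_trans cardS; apply/proper_card/properP; split=> //.
  by exists v.
- exact: subset_trans SV.
exists (x |: X), (v |: I); split.
- by rewrite subUset sub1set xS (subset_trans XS').
- by rewrite subUset sub1set vS (subset_trans IS').
- apply: strongly_independentU1 => // e eE ve; apply/setP => y; rewrite !inE.
  apply/negbTE/andP => -[/(subsetP IS')]; rewrite inE => /andP[yS xy] ye.
  have ytv := mem_top eE ve ye (vmin y yS).
  have ySv : y \in S :&: top v by rewrite inE yS ytv.
  by rewrite (mem_top topvE ytv xtv (xmax y ySv)) in xy.
- move=> z zS; have [xz|xz] := boolP (x \in top z); first by exists x; rewrite ?setU11.
  have [|x' x'X x'z] := hitS' z; first by rewrite inE zS.
  by exists x'; rewrite ?setU1r.
- rewrite !cardsU1 (negbTE (contra (subsetP IS' v) vS')).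
  by apply: leq_add (leq_b1 _) cardXI.
Qed.

Lemma hred_hinduced_top S g : g \in hred (hinduced E S) ->
  exists2 z, z \in S & g = S :&: top z.
Proof.
rewrite inE => /andP[gS /exists_inPn maxg].
have /imsetP[e0 /setIdP[e0E e0S] ge0] := gS.
have g0 : g != set0 by rewrite ge0.
pose P := [pred e | (e \in E) && (S :&: e == g)].
have Pe0 : P e0 by rewrite inE e0E ge0 eqxx.
have [e /andP[eE /eqP Seg] maxe] := arg_maxnP rk Pe0.
have ge : g \subset e by rewrite -Seg subsetIr.
have [z zg /eqP ez] : exists2 z, z \in g & top z == e.
  apply/exists_inP; apply: contraT => /exists_inPn notop.
  have [p pE [ltep gp]] := higher_edge_subset eE ge g0 notop.
  have gSp : g \subset S :&: p by rewrite subsetI gp -Seg subsetIl.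
  have SpE : S :&: p \in hinduced E S.
    apply/imsetP; exists p => //; rewrite inE pE; apply: contraNneq g0 => Sp0.
    by rewrite -subset0 -Sp0.
  have Spg : S :&: p = g by apply/eqP; apply: contraNT (maxg _ SpE) => ->.
  by have := maxe p; rewrite inE pE Spg eqxx => /(_ isT) /=; rewrite leqNgt ltep.
by exists z; [apply: (subsetP (subsetIl S e)); rewrite Seg | rewrite ez].
Qed.

End RankedHypergraph.

Section JoinTree.
Variable T : finType.
Implicit Types (E : {set {set T}}) (t r : rel {set T}) (a b l q x y : {set T}).

Definition delete_node r l := [rel a b | [&& r a b, a != l & b != l]].

Lemma connect_delete_leaf t r l q : subrel r t -> symmetric t ->
    (forall y, t l y -> y = q) ->
  forall x y, x != l -> y != l -> connect r x y -> connect (delete_node r l) x y.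
Proof.
move=> rt tsym leaf x y xl yl /connectP[p0 p0r y_p0].
case: (shortenP p0r) y_p0 => p pr p_uniq _ y_p; apply/connectP; exists p => //.
(* On the duplicate-free path p, l could only be entered and left through q. *)
have pl : all (predC1 l) (x :: p).
  apply/allP => a ap; apply: contraTneq ap => ->; apply/negP => lp.
  have {}lp : l \in p by move: lp; rewrite inE eq_sym (negbTE xl).
  case/splitPr: lp pr p_uniq y_p yl => p1 p2.
  rewrite cat_path /= => /and3P[_ rl p2r].
  case: p2 p2r => [|z p2] p2r p_uniq; first by rewrite last_cat => ->; rewrite /= eqxx.
  move=> _ _; have /andP[rlz _] := p2r.
  have z_q : z = q := leaf _ (rt _ _ rlz).
  have last_q : last x p1 = q by apply: leaf; rewrite tsym; apply: rt rl.
  have : uniq ((x :: p1) ++ [:: l, z & p2]) := p_uniq.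
  rewrite cat_uniq => /and3P[_ /hasPn z_p1 _].
  have zlz : z \in [:: l, z & p2] by rewrite !inE eqxx orbT.
  by move: (z_p1 z zlz); rewrite z_q -last_q mem_last.
by apply: sub_in_path pl pr => a b; rewrite !inE /= => -> -> ->.
Qed.

Lemma connect_first_step r a b : a != b -> connect r a b -> exists z, r a z.
Proof.
move=> ab /connectP[[|z p] /=]; first by move=> _ ba; rewrite ba eqxx in ab.
by case/andP=> raz _ _; exists z.
Qed.

Lemma card_rel_pairs t :
  #|[set p : {set T} * {set T} | t p.1 p.2]| = \sum_a #|[set b | t a b]|.
Proof.
rewrite -sum1_card; under [RHS]eq_bigr => a _ do rewrite -sum1_card.
by rewrite pair_big_dep /=; apply: eq_bigl => -[a b]; rewrite !inE.
Qed.

Lemma join_tree_leaf E t : is_join_tree E t -> 1 < #|E| ->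
  exists l q, [/\ l \in E, q \in E, q != l, t l q & forall y, t l y -> y = q].
Proof.
case=> tE [_ tirr] tconn tcard _ E_gt1.
pose deg a := #|[set b | t a b]|.
have [l lE deg_l] : exists2 l, l \in E & deg l <= 1.
  (* Handshake: the degrees add up to 2 (#|E| - 1) < 2 #|E|. *)
  apply/exists_inP; apply: contraT; rewrite negb_exists_in => /forall_inP deg_gt1.
  have : \sum_(a in E) 2 <= \sum_a deg a.
    rewrite [X in _ <= X](bigID [in E]) /= (leq_trans _ (leq_addr _ _)) //.
    by apply: leq_sum => a aE; rewrite ltnNge deg_gt1.
  by rewrite sum_nat_const -card_rel_pairs tcard; lia.
have /card_gt0P[e1] : 0 < #|E :\ l| by move: E_gt1; rewrite (cardsD1 l) lE.
rewrite !inE eq_sym => /andP[le1 e1E].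
have [q tlq] := connect_first_step le1 (tconn l e1 lE e1E).
have /andP[_ qE] := tE l q tlq.
exists l, q; split=> //; first by apply: contraTneq tlq => ->; apply: tirr.
by move=> y tly; apply: (card_le1_eqP deg_l); rewrite inE.
Qed.

Lemma join_tree_delete_leaf E t l q : is_join_tree E t -> t l q ->
  (forall y, t l y -> y = q) -> is_join_tree (E :\ l) (delete_node t l).
Proof.
case=> tE [tsym tirr] tconn tcard tvconn tlq leaf.
have /andP[lE qE] := tE l q tlq.
have ql : q != l by apply: contraTneq tlq => ->; apply: tirr.
have connect_del := connect_delete_leaf _ tsym leaf.
split.
- by move=> a b /and3P[/tE/andP[aE bE] al bl]; rewrite !inE al bl aE bE.
- split=> [a b|a]; first by rewrite /= tsym (andbC (a != l)).
  by rewrite /= (negbTE (tirr a)).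
- move=> a b; rewrite !inE => /andP[al aE] /andP[bl bE].
  exact: connect_del (fun _ _ => id) _ _ al bl (tconn a b aE bE).
- have -> : [set p : {set T} * {set T} | delete_node t l p.1 p.2] =
            [set p : {set T} * {set T} | t p.1 p.2] :\: [set (l, q); (q, l)].
    apply/setP => -[a b]; rewrite !inE /= !xpair_eqE.
    have [tab|] := boolP (t a b); last by rewrite !andbF.
    have [al|al] := eqVneq a l; first by rewrite al (leaf b) -?al ?eqxx.
    have [bl|bl] := eqVneq b l; last by rewrite !andbF.
    by rewrite bl (leaf a) ?eqxx ?andbF // tsym -bl.
  rewrite cardsD (setIidPr _) ?cards2; last first.
    by rewrite subUset !sub1set !inE /= tlq -tsym tlq.
  have : 0 < #|E :\ l| by apply/card_gt0P; exists q; rewrite !inE ql qE.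
  rewrite tcard (cardsD1 l E) lE xpair_eqE (eq_sym l) (negbTE ql) /= !natrME.
  by move: #|E :\ l| => k; lia.
- move=> v a b; rewrite !inE => /andP[al aE] /andP[bl bE] va vb.
  have sub_v : subrel (fun a b => [&& t a b, v \in a & v \in b]) t by move=> ? ? /andP[].
  rewrite (eq_connect (e' := delete_node (fun a b => [&& t a b, v \in a & v \in b]) l)).
    exact: connect_del _ sub_v _ _ al bl (tvconn v a b aE bE va vb).
  by move=> x y /=; rewrite -!andbA; do !bool_congr.
Qed.

Lemma join_tree_leaf_trace E t l q f : is_join_tree E t -> (forall y, t l y -> y = q) ->
  l \in E -> f \in E -> f != l -> l :&: f \subset q.
Proof.
case=> _ _ _ _ tvconn leaf lE fE fl; apply/subsetP => x /setIP[xl xf].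
have lf : l != f by rewrite eq_sym.
by have [z /and3P[/leaf -> _]] := connect_first_step lf (tvconn x l f lE fE xl xf).
Qed.

End JoinTree.

Lemma running_intersection_add_leaf (T : finType) (E : {set {set T}}) l q
    (rk : {set T} -> nat) :
    l \in E -> q \in E -> q != l -> {in E, forall f, f != l -> l :&: f \subset q} ->
    {in E :\ l &, injective rk} -> running_intersection (E :\ l) rk ->
  exists rk' : {set T} -> nat, {in E &, injective rk'} /\ running_intersection E rk'.
Proof.
move=> lE qE ql lq rk_inj rk_rip.
pose rk' e := if e == l then 0 else (rk e).+1.
have rk'_l : rk' l = 0 by rewrite /rk' eqxx.
have rk'S e : e != l -> rk' e = (rk e).+1 by rewrite /rk' => /negbTE->.
have rk'_gt0 f : (0 < rk' f) = (f != l) by rewrite /rk'; case: eqP.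
have E_l e : e \in E -> e != l -> e \in E :\ l by rewrite !inE => -> ->.
exists rk'; split.
  move=> e f eE fE; have [->|el] := eqVneq e l; have [->|fl] := eqVneq f l => //.
  - by rewrite rk'_l rk'S.
  - by rewrite rk'_l rk'S.
  by rewrite !rk'S // => -[/rk_inj]; apply; apply: E_l.
move=> e f eE fE lt_ef; have [->|el] := eqVneq e l.
  exists q => //; rewrite rk'_l rk'_gt0; split=> // g gE.
  by rewrite rk'_gt0; apply: lq.
have fl : f != l by rewrite -rk'_gt0 (leq_ltn_trans _ lt_ef).
have [|p] := rk_rip e f (E_l e eE el) (E_l f fE fl); first by rewrite -ltnS -!rk'S.
rewrite !inE => /andP[pl pE] [lt_ep sub_ep].
exists p => //; split; first by rewrite !rk'S.
move=> g gE; have [->|gl] := eqVneq g l; first by rewrite rk'_l.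
by rewrite !rk'S // ltnS; apply: sub_ep; apply: E_l.
Qed.

Lemma join_tree_rank (T : finType) (E : {set {set T}}) t : is_join_tree E t ->
  exists rk : {set T} -> nat, {in E &, injective rk} /\ running_intersection E rk.
Proof.
have [n] := ubnP #|E|; elim: n E t => // n IH E t /ltnSE cardE jt.
have [E_le1|E_gt1] := leqP #|E| 1.
  by exists (fun=> 0); split=> [e f eE fE _|//]; apply: (card_le1_eqP E_le1).
have [l [q [lE qE ql tlq leaf]]] := join_tree_leaf jt E_gt1.
have [|rk [rk_inj rk_rip]] := IH _ _ _ (join_tree_delete_leaf jt tlq leaf).
  by move: cardE; rewrite (cardsD1 l E) lE.
have lq f : f \in E -> f != l -> l :&: f \subset q := join_tree_leaf_trace jt leaf lE.
exact: running_intersection_add_leaf lE qE ql lq rk_inj rk_rip.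
Qed.

Lemma hinduced_strongly_independent (T : finType) (E : {set {set T}}) I :
    strongly_independent E I -> I \subset hvertices E ->
  hinduced E I = [set [set y] | y in I].
Proof.
move=> indI IV; apply/setP => g.
apply/imsetP/imsetP => [[e /setIdP[eE Ie0] ->]|[y yI ->]].
  have /cards1P[y Iey] : #|I :&: e| == 1 by rewrite eqn_leq indI // card_gt0.
  by exists y; rewrite // (subsetP (subsetIl I e)) // Iey set11.
have /bigcupP[e eE ye] := subsetP IV y yI.
have Iey : [set y] = I :&: e.
  by apply/eqP; rewrite eqEcard sub1set inE yI ye cards1 indI.
by exists e; rewrite // inE eE -Iey; apply/set0Pn; exists y; rewrite set11.
Qed.

Lemma hred_antichain (T : finType) (F : {set {set T}}) :
  {in F &, forall e f : {set T}, e \subset f -> e = f} -> hred F = F.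
Proof.
move=> anti; apply/setP => e; rewrite inE andb_idr // => eF.
apply/exists_inPn => f fF; rewrite negb_and negbK orbC -implybE.
by apply/implyP => /(anti _ _ eF fF)->.
Qed.

Local Open Scope ring_scope.

Lemma ler_sum_term (R : numDomainType) (I : finType) (A : {set I}) (P : pred I)
    (F : I -> R) j :
  (forall i, i \in A -> P i -> 0 <= F i) -> j \in A -> P j ->
  F j <= \sum_(i in A | P i) F i.
Proof.
move=> F0 Aj Pj; rewrite (bigD1 j) ?Aj //= lerDl sumr_ge0 // => i /andP[/andP[iA Pi] _].
exact: F0.
Qed.

Section FractionalBounds.
Variables (R : realType) (T : finType).
Implicit Types (E G C : {set {set T}}) (I X : {set T}).

Lemma exchange_incidence E I (w : {set T} -> R) :
  \sum_(v in I) \sum_(e in E | v \in e) w e = \sum_(e in E) \sum_(v in I | v \in e) w e.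
Proof.
under eq_bigr => v _ do rewrite big_mkcondr.
by rewrite exchange_big /=; apply: eq_bigr => e _; rewrite big_mkcondr.
Qed.

Lemma rho_star_ge E I : strongly_independent E I -> I \subset hvertices E ->
  #|I|%:R <= rho_star R E.
Proof.
move=> indI IV; apply: lb_le_inf => [|_ [w [w0 wcov] <-]].
  exists (\sum_(e in E) 1), (fun=> 1) => //; split=> // v /bigcupP[e eE ve].
  exact: ler_sum_term eE ve.
have I_le : #|I|%:R <= \sum_(v in I) \sum_(e in E | v \in e) w e.
  by rewrite -sum1_card natr_sum; apply: ler_sum => v vI; apply/wcov/(subsetP IV).
apply: le_trans I_le _; rewrite exchange_incidence; apply: ler_sum => e eE.
rewrite (eq_bigl [in I :&: e]) => [|v]; last by rewrite inE.
by rewrite sumr_const -[leRHS]mulr1n ler_wpMn2l ?w0 ?indI.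
Qed.

Lemma rho_star_le_cover E C : C \subset E -> hvertices E \subset cover C ->
  rho_star R E <= #|C|%:R.
Proof.
move=> CE VC; apply: ge_inf.
  by exists 0 => _ [w [w0 _] <-]; apply: sumr_ge0.
exists (fun e => (e \in C)%:R).
  split=> [e _|v /(subsetP VC)/bigcupP[c cC vc]]; first by case: (e \in C).
  apply: le_trans (_ : (c \in C)%:R <= _); first by rewrite cC.
  by apply: ler_sum_term (subsetP CE c cC) vc => e; case: (e \in C).
rewrite (big_setID C) /= (setIidPr CE) [X in _ + X]big1 ?addr0.
  by rewrite -sum1_card natr_sum; apply: eq_bigr => e ->.
by move=> e /setDP[_ /negbTE->].
Qed.

Lemma tau_star_le_transversal G X :
  {in G, forall g : {set T}, exists2 x, x \in X & x \in g} -> tau_star R G <= #|X|%:R.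
Proof.
move=> hitG; apply: ge_sup => [|_ [w [w0 wpack] <-]].
  by exists 0, (fun=> 0); [split=> // v _; rewrite big1 | rewrite big1].
have le_X : \sum_(g in G) w g <= \sum_(g in G) \sum_(x in X | x \in g) w g.
  apply: ler_sum => g gG; have [x xX xg] := hitG g gG.
  by apply: (ler_sum_term (F := fun=> w g)) xX xg => x' _ _; apply: w0.
apply: le_trans le_X _; rewrite -exchange_incidence -sum1_card natr_sum.
apply: ler_sum => x _; have [xV|xV] := boolP (x \in hvertices G); first exact: wpack.
rewrite big_pred0 // => g; apply: contraNF xV => /andP[gG xg].
by apply/bigcupP; exists g.
Qed.

Lemma tau_star_ge_packing G w : set0 \notin G -> is_frac_packing G w ->
  \sum_(g in G) w g <= tau_star R G.
Proof.
move=> G0 wP; apply: ub_le_sup; last by exists w.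
exists #|G|%:R => _ [u [u0 upack] <-].
rewrite -sum1_card natr_sum; apply: ler_sum => g gG.
have /set0Pn[v vg] : g != set0 by apply: contraNneq G0 => <-.
apply: le_trans (upack v _); last by apply/bigcupP; exists g.
by apply: ler_sum_term gG vg => e eG _; apply: u0.
Qed.

Lemma tau_star_ge_singletons I : #|I|%:R <= tau_star R [set [set y] | y in I].
Proof.
rewrite -(card_imset I set1_inj) -sumr_const; apply: tau_star_ge_packing.
  by apply/imsetP => -[y _ /setP/(_ y)]; rewrite !inE eqxx.
split=> // v /bigcupP[_ /imsetP[y yI ->]]; rewrite inE => /eqP->.
rewrite (eq_bigl (pred1 [set y])) ?big_pred1_eq // => g.
apply/andP/eqP => [[/imsetP[z _ ->]]|->]; first by rewrite inE => /eqP->.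
by rewrite imset_f ?set11.
Qed.

Lemma tau_star_ge E I : strongly_independent E I -> I \subset hvertices E ->
  #|I|%:R <= tau_star R (hred (hinduced E I)).
Proof.
move=> indI IV; rewrite hinduced_strongly_independent // hred_antichain.
  exact: tau_star_ge_singletons.
by move=> _ _ /imsetP[y _ ->] /imsetP[z _ ->]; rewrite sub1set inE => /eqP->.
Qed.

End FractionalBounds.

Theorem lemma3p7 (R : realType) (T : finType) (E : {set {set T}}) :
  finset.set0 \notin E -> acyclic E -> kappa R E = rho_star R E.
Proof.
move=> _ [t /join_tree_rank[rk [rk_inj rk_rip]]].
have [I [IV indI] Vtop] := greedy_cover rk_inj rk_rip (subxx (hvertices E)).
have rho_ge_I := rho_star_ge R indI IV.
apply/eqP; rewrite eq_le; apply/andP; split.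
  apply: bigmax_le => [|S SV]; first exact: le_trans rho_ge_I.
  have [X [J [XS JS indJ hitS le_XJ]]] := greedy_transversal rk_inj rk_rip SV.
  have hitG : {in hred (hinduced E S), forall g : {set T}, exists2 x, x \in X & x \in g}.
    move=> g /(hred_hinduced_top rk_inj rk_rip)[z zS ->].
    by have [x xX xz] := hitS z zS; exists x; rewrite // inE (subsetP XS) ?xz.
  apply: le_trans (tau_star_le_transversal R hitG) _.
  apply: le_trans (rho_star_ge R indJ (subset_trans JS SV)).
  by rewrite ler_nat.
have topIE : top E rk @: I \subset E.
  by apply/subsetP => _ /imsetP[y yI ->]; have [] := topP rk (subsetP IV y yI).
apply: le_trans (rho_star_le_cover R topIE Vtop) _.
apply: le_trans (_ : #|I|%:R <= _); first by rewrite ler_nat leq_imset_card.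
apply: le_trans (tau_star_ge R indI IV) _.
rewrite /kappa; exact: (@le_bigmax_cond _ _ _ 0 I (fun S => S \subset hvertices E) _ IV).
Qed.
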